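(* Let $d\ge 1$, $\kappa \in \{0,\dots,d-1\}$, $\varepsilon_0 \ge 0$, $p_0 = \frac{e^{\varepsilon_0}}{1+e^{\varepsilon_0}}$, $\varepsilon\ge 0$, and $\tau = \lceil\frac{d+\kappa+1}{2}\rceil/d$. If \[ \log\Big(\sum_{\ell=0}^{d\tau-1}\binom d\ell\Big) - \log\Big(\sum_{\ell=d\tau}^{d}\binom d\ell\Big) \le \varepsilon, \] then the mechanism $u\mapsto\mathrm{PrivUnitInfty}(u,\kappa,p_0)$ on $[-1,1]^d$ is $(\varepsilon+\varepsilon_0)$-locally differentially private.
   Context: $\mathrm{PrivUnitInfty}(u,\kappa,p)$ for $u\in[-1,1]^d$, $\kappa\in\{0,\dots,d-1\}$, $p\in[1/2,1]$: independently for each $j$, set $\widehat U_j=1$ with probability $\frac{1+u_j}2$ and $\widehat U_j=-1$ otherwise. Then with probability $p$ draw $V$ uniformly from $\{v\in\{-1,1\}^d:\langle v,\widehat U\rangle>\kappa\}$, and otherwise uniformly from $\{v\in\{-1,1\}^d:\langle v,\widehat U\rangle\le\kappa\}$. With $\tau=\lceil\frac{d+\kappa+1}2\rceil/d$ set $m = p\frac{\binom{d-1}{d\tau-1}}{\sum_{\ell=d\tau}^d\binom d\ell} - (1-p)\frac{\binom{d-1}{d\tau-1}}{\sum_{\ell=0}^{d\tau-1}\binom d\ell}$ and output $Z=V/m$. A mechanism $M$ is $\varepsilon$-locally differentially private if $\mathbb P(M(u)\in S)\le e^{\varepsilon}\mathbb P(M(u')\in S)$ for all inputs $u,u'$ and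 all sets $S$. *)

From Stdlib Require Import Reals List Arith ClassicalEpsilon.
Import ListNotations.
Open Scope R_scope.

(* Sum of f l over l in [a, b] (natural numbers; empty if b < a). *)
Definition sum_range (a b : nat) (f : nat -> R) : R :=
  fold_right Rplus 0 (map f (seq a (S b - a))).

Definition lsum {A : Type} (l : list A) (f : A -> R) : R :=
  fold_right Rplus 0 (map f l).

(* Sign vectors in {-1,1}^d, encoded as lists of booleans of length d
   (true = +1, false = -1); enumerated without repetition. *)
Fixpoint signvecs (d : nat) : list (list bool) :=
  match d with
  | O => [[]]
  | S n => map (cons true) (signvecs n) ++ map (cons false) (signvecs n)
  end.

Definition sgn (b : bool) : R := if b then 1 else -1.

Definition to_real (v : list bool) : list R := map sgn v.

Definition ip (v w : list bool) : R :=
  fold_right Rplus 0 (map (fun xy : bool * bool => sgn (fst xy) * sgn (snd xy)) (combine v w)).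

Definition prob_Uhat (u : list R) (w : list bool) : R :=
  fold_right Rmult 1
    (map (fun xy : R * bool => if snd xy then (1 + fst xy) / 2 else (1 - fst xy) / 2)
         (combine u w)).

Definition n_above (d kappa : nat) (w : list bool) : R :=
  INR (length (filter (fun v => if Rlt_dec (INR kappa) (ip v w) then true else false)
                      (signvecs d))).
Definition n_below (d kappa : nat) (w : list bool) : R :=
  INR (length (filter (fun v => if Rlt_dec (INR kappa) (ip v w) then false else true)
                      (signvecs d))).

Definition prob_V_given (d kappa : nat) (p : R) (w v : list bool) : R :=
  if Rlt_dec (INR kappa) (ip v w) then p / n_above d kappa w
  else (1 - p) / n_below d kappa w.

Definition prob_V (d kappa : nat) (p : R) (u : list R) (v : list bool) : R :=
  lsum (signvecs d) (fun w => prob_Uhat u w * prob_V_given d kappa p w v).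

(* d * tau = ceil((d + kappa + 1) / 2) = (d + kappa + 2) / 2 (nat division). *)
Definition dtau (d kappa : nat) : nat := Nat.div (d + kappa + 2) 2.

Definition m_const (d kappa : nat) (p : R) : R :=
  let t := dtau d kappa in
  p * C (d - 1) (t - 1) / sum_range t d (fun l => C d l)
  - (1 - p) * C (d - 1) (t - 1) / sum_range 0 (t - 1) (fun l => C d l).

Definition outZ (d kappa : nat) (p : R) (v : list bool) : list R :=
  map (fun x => x / m_const d kappa p) (to_real v).

Definition indic {A : Type} (S : A -> Prop) (x : A) : R :=
  if excluded_middle_informative (S x) then 1 else 0.

Definition prob_out (d kappa : nat) (p : R) (u : list R) (S : list R -> Prop) : R :=
  lsum (signvecs d) (fun v => indic S (outZ d kappa p v) * prob_V d kappa p u v).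

Definition in_cube (d : nat) (u : list R) : Prop :=
  length u = d /\ Forall (fun x => -1 <= x <= 1) u.

Definition privunit_LDP (d kappa : nat) (p eps : R) : Prop :=
  forall (u u' : list R) (S : list R -> Prop),
    in_cube d u -> in_cube d u' ->
    prob_out d kappa p u S <= exp eps * prob_out d kappa p u' S.

From Stdlib Require Import Reals.
From Stdlib Require Import List Arith Lia Lra Psatz ClassicalEpsilon.
Import ListNotations.
Open Scope R_scope.

(* For any w in {-1,1}^d the number of v with <v,w> = 2l - d is
   binom(d,l); as <v,w> > kappa iff l >= d*tau, the set {<v,w> > kappa} has
   U = sum_{l >= d tau} binom(d,l) elements and its complement
   L = sum_{l < d tau} binom(d,l) elements, whatever w is.  Flipping w shows U <= L, and U >= 1.

   Hence P(V = v | Uhat = w) only takes the two values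
   a = p0/U and c = (1-p0)/L, with c <= a <= e^eps e^eps0 c because
   U <= L <= e^eps U (the latter is the hypothesis on the logarithms).
   P(V = v | u) is a convex combination of these conditional probabilities,
   so it lies in [c, a] for every input u; comparing two inputs gives the
   ratio bound e^(eps+eps0) pointwise in v, and summing over the output
   event gives the claim. *)

Lemma lsum_nil {A} (f : A -> R) : lsum [] f = 0.
Proof. reflexivity. Qed.

Lemma lsum_cons {A} (x : A) l f : lsum (x :: l) f = f x + lsum l f.
Proof. reflexivity. Qed.

Lemma lsum_app {A} (l1 l2 : list A) f : lsum (l1 ++ l2) f = lsum l1 f + lsum l2 f.
Proof.
  induction l1 as [|x l1 IH]; [rewrite lsum_nil; simpl; ring|].
  simpl; rewrite !lsum_cons, IH; ring.
Qed.

Lemma lsum_map {A B} (g : A -> B) l f : lsum (map g l) f = lsum l (fun x => f (g x)).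
Proof. induction l as [|x l IH]; [reflexivity|]. rewrite map_cons, !lsum_cons, IH; reflexivity. Qed.

Lemma lsum_ext_in {A} (l : list A) f g :
  (forall x, In x l -> f x = g x) -> lsum l f = lsum l g.
Proof.
  induction l as [|x l IH]; intros H; [reflexivity|].
  rewrite !lsum_cons, H, IH; simpl; auto.
  intros y Hy; apply H; simpl; auto.
Qed.

Lemma lsum_le_in {A} (l : list A) f g :
  (forall x, In x l -> f x <= g x) -> lsum l f <= lsum l g.
Proof.
  induction l as [|x l IH]; intros H; [rewrite !lsum_nil; lra|].
  rewrite !lsum_cons; apply Rplus_le_compat;
    [apply H | apply IH; intros; apply H]; simpl; auto.
Qed.

Lemma lsum_scal {A} (l : list A) c f : lsum l (fun x => c * f x) = c * lsum l f.
Proof. induction l as [|x l IH]; [rewrite !lsum_nil; ring|]. rewrite !lsum_cons, IH; ring. Qed.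

Lemma lsum_plus {A} (l : list A) f g : lsum l (fun x => f x + g x) = lsum l f + lsum l g.
Proof. induction l as [|x l IH]; [rewrite !lsum_nil; ring|]. rewrite !lsum_cons, IH; ring. Qed.

Lemma lsum_zero {A} (l : list A) : lsum l (fun _ => 0) = 0.
Proof. induction l as [|x l IH]; [reflexivity|]. rewrite lsum_cons, IH; ring. Qed.

Lemma lsum_ge_term {A} (l : list A) f y :
  (forall x, In x l -> 0 <= f x) -> In y l -> f y <= lsum l f.
Proof.
  intros Hpos Hy.
  induction l as [|x l IH]; [destruct Hy|].
  rewrite lsum_cons.
  assert (Hrest : 0 <= lsum l f).
  { rewrite <- (lsum_zero l); apply lsum_le_in; intros; apply Hpos; simpl; auto. }
  assert (Hx : 0 <= f x) by (apply Hpos; simpl; auto).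
  destruct Hy as [<-|Hy]; [lra|].
  assert (f y <= lsum l f) by (apply IH; auto; intros; apply Hpos; simpl; auto).
  lra.
Qed.

Lemma lsum_mixture_bounds {A} (l : list A) (wt f : A -> R) lo hi :
  (forall x, In x l -> 0 <= wt x) -> lsum l wt = 1 ->
  (forall x, In x l -> lo <= f x <= hi) ->
  lo <= lsum l (fun x => wt x * f x) <= hi.
Proof.
  intros Hwt Hsum Hf.
  replace lo with (lsum l (fun x => lo * wt x)) by (rewrite lsum_scal, Hsum; ring).
  replace hi with (lsum l (fun x => hi * wt x)) by (rewrite lsum_scal, Hsum; ring).
  split; apply lsum_le_in; intros x Hx;
    specialize (Hwt x Hx); specialize (Hf x Hx); nra.
Qed.

Lemma count_lsum {A} (f : A -> bool) l :
  INR (length (filter f l)) = lsum l (fun v => if f v then 1 else 0).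
Proof.
  induction l as [|x l IH]; [reflexivity|].
  simpl filter; rewrite lsum_cons.
  destruct (f x); simpl length; [rewrite S_INR, IH; ring | rewrite IH; ring].
Qed.

Lemma sum_range_lsum a b f : sum_range a b f = lsum (seq a (S b - a)) f.
Proof. reflexivity. Qed.

(* Binomial coefficients by Pascal's rule.  Unlike Stdlib's [C], [binom n k]
   vanishes for k > n, which makes the recursion valid on the whole range. *)

Fixpoint binom (n k : nat) : nat :=
  match n, k with
  | _, O => 1%nat
  | O, S _ => 0%nat
  | S n', S k' => (binom n' k' + binom n' (S k'))%nat
  end.

Lemma binom_big : forall n k, (n < k)%nat -> binom n k = 0%nat.
Proof. induction n; intros [|k] H; simpl; try lia; auto. rewrite !IHn; lia. Qed.

Lemma binom_diag : forall n, binom n n = 1%nat.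
Proof. induction n; simpl; auto. rewrite IHn, binom_big; lia. Qed.

Lemma C_n0 n : C n 0 = 1.
Proof. unfold C. rewrite Nat.sub_0_r. simpl (INR (fact 0)). field. apply INR_fact_neq_0. Qed.

Lemma C_nn n : C n n = 1.
Proof. unfold C. rewrite Nat.sub_diag. simpl (INR (fact 0)). field. apply INR_fact_neq_0. Qed.

Lemma C_binom : forall n k, (k <= n)%nat -> C n k = INR (binom n k).
Proof.
  induction n; intros [|k] H.
  - rewrite C_n0; reflexivity.
  - lia.
  - rewrite C_n0; reflexivity.
  - destruct (Nat.eq_dec k n) as [->|Hk].
    + rewrite C_nn, binom_diag; reflexivity.
    + rewrite <- pascal by lia. simpl binom. rewrite plus_INR, !IHn by lia. reflexivity.
Qed.

Lemma C_nonneg n k : (k <= n)%nat -> 0 <= C n k.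
Proof. intros H. rewrite C_binom by exact H. apply pos_INR. Qed.

Lemma pascal_sum n (G : nat -> R) :
  lsum (seq 0 (S (S n))) (fun l => INR (binom (S n) l) * G l) =
  lsum (seq 0 (S n)) (fun l => INR (binom n l) * G (S l)) +
  lsum (seq 0 (S n)) (fun l => INR (binom n l) * G l).
Proof.
  change (seq 0 (S (S n))) with (0%nat :: seq 1 (S n)).
  rewrite <- seq_shift, lsum_cons, lsum_map.
  rewrite (lsum_ext_in _ _
             (fun l => INR (binom n l) * G (S l) + INR (binom n (S l)) * G (S l)))
    by (intros; simpl binom; rewrite plus_INR; ring).
  rewrite lsum_plus.
  assert (Hshift : lsum (seq 0 (S n)) (fun l => INR (binom n l) * G l) =
                   G 0%nat + lsum (seq 0 n) (fun l => INR (binom n (S l)) * G (S l))).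
  { change (seq 0 (S n)) with (0%nat :: seq 1 n).
    rewrite <- seq_shift, lsum_cons, lsum_map.
    replace (binom n 0) with 1%nat by (destruct n; reflexivity). simpl INR; ring. }
  assert (Hlast : lsum (seq 0 (S n)) (fun l => INR (binom n (S l)) * G (S l)) =
                  lsum (seq 0 n) (fun l => INR (binom n (S l)) * G (S l))).
  { rewrite seq_S, lsum_app, lsum_cons, lsum_nil, binom_big by lia. simpl INR; ring. }
  rewrite Hshift, Hlast. simpl (binom (S n) 0). simpl INR. ring.
Qed.

Lemma ip_cons c v x w : ip (c :: v) (x :: w) = sgn c * sgn x + ip v w.
Proof. reflexivity. Qed.

Lemma ip_negb : forall v w, ip v (map negb w) = - ip v w.
Proof.
  induction v as [|c v IH]; intros [|x w]; try (unfold ip; simpl; ring).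
  simpl map. rewrite !ip_cons, IH. destruct c, x; simpl; ring.
Qed.

Lemma signvecs_length : forall d w, In w (signvecs d) -> length w = d.
Proof.
  induction d; simpl; intros w H.
  - destruct H as [<-|[]]; reflexivity.
  - apply in_app_or in H.
    destruct H as [H|H]; apply in_map_iff in H; destruct H as [x [<- Hx]];
      simpl; f_equal; auto.
Qed.

Lemma lsum_signvecs_ip : forall n w (F : R -> R), length w = n ->
  lsum (signvecs n) (fun v => F (ip v w)) =
  lsum (seq 0 (S n)) (fun l => INR (binom n l) * F (2 * INR l - INR n)).
Proof.
  induction n; intros w F Hw.
  - destruct w; [|discriminate]. unfold lsum, ip; simpl.
    replace (2 * 0 - 0) with 0 by ring. ring.
  - destruct w as [|x w]; [discriminate|]. simpl in Hw; injection Hw as Hw.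
    simpl signvecs. rewrite lsum_app, !lsum_map.
    rewrite (lsum_ext_in _ _ (fun v => (fun t => F (sgn true * sgn x + t)) (ip v w)))
      by (intros; rewrite ip_cons; reflexivity).
    rewrite (lsum_ext_in _ (fun v => F (ip (false :: v) (x :: w)))
               (fun v => (fun t => F (sgn false * sgn x + t)) (ip v w)))
      by (intros; rewrite ip_cons; reflexivity).
    rewrite (IHn w (fun t => F (sgn true * sgn x + t)) Hw),
            (IHn w (fun t => F (sgn false * sgn x + t)) Hw).
    rewrite (pascal_sum n (fun l => F (2 * INR l - INR (S n)))).
    destruct x; simpl sgn; [|rewrite Rplus_comm]; f_equal; apply lsum_ext_in;
      intros l _; rewrite ?S_INR; do 2 f_equal; ring.
Qed.

(* U = #{v : <v,w> > kappa} and L = #{v : <v,w> <= kappa}. *)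
Definition binom_upper (d kappa : nat) : R := sum_range (dtau d kappa) d (fun l => C d l).
Definition binom_lower (d kappa : nat) : R := sum_range 0 (dtau d kappa - 1) (fun l => C d l).

Lemma above_threshold_iff d k l : INR k < 2 * INR l - INR d <-> (dtau d k <= l)%nat.
Proof.
  assert (Hint : (k + d < l + l)%nat <-> (dtau d k <= l)%nat).
  { unfold dtau.
    pose proof (Nat.div_mod (d + k + 2) 2 ltac:(lia)).
    pose proof (Nat.mod_upper_bound (d + k + 2) 2 ltac:(lia)). lia. }
  rewrite <- Hint. split; intros H.
  - apply INR_lt. rewrite !plus_INR. lra.
  - apply lt_INR in H. rewrite !plus_INR in H. lra.
Qed.

Lemma dtau_range d k : (1 <= dtau d k /\ dtau d k + dtau d k <= d + k + 2)%nat.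
Proof.
  unfold dtau.
  pose proof (Nat.div_mod (d + k + 2) 2 ltac:(lia)).
  pose proof (Nat.mod_upper_bound (d + k + 2) 2 ltac:(lia)). lia.
Qed.

Lemma lsum_level_sets d k w x y : (k <= d)%nat -> length w = d ->
  lsum (signvecs d) (fun v => if Rlt_dec (INR k) (ip v w) then x else y) =
  x * binom_upper d k + y * binom_lower d k.
Proof.
  intros Hk Hw. pose proof (dtau_range d k).
  rewrite (lsum_signvecs_ip d w (fun t => if Rlt_dec (INR k) t then x else y) Hw).
  replace (S d) with (dtau d k + (S d - dtau d k))%nat at 1 by lia.
  rewrite seq_app, lsum_app. simpl (0 + dtau d k)%nat.
  rewrite (lsum_ext_in (seq 0 _) _ (fun l => y * C d l)).
  2:{ intros l Hl. apply in_seq in Hl. rewrite C_binom by lia.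
      destruct Rlt_dec as [r|]; [apply above_threshold_iff in r; lia | ring]. }
  rewrite (lsum_ext_in (seq (dtau d k) _) _ (fun l => x * C d l)).
  2:{ intros l Hl. apply in_seq in Hl. rewrite C_binom by lia.
      destruct Rlt_dec as [|r]; [ring | exfalso; apply r, above_threshold_iff; lia]. }
  rewrite !lsum_scal. unfold binom_upper, binom_lower. rewrite !sum_range_lsum.
  replace (S (dtau d k - 1) - 0)%nat with (dtau d k) by lia. apply Rplus_comm.
Qed.

Lemma n_above_eq d k w : (k <= d)%nat -> length w = d -> n_above d k w = binom_upper d k.
Proof.
  intros Hk Hw. unfold n_above. rewrite count_lsum.
  rewrite (lsum_ext_in _ _ (fun v => if Rlt_dec (INR k) (ip v w) then 1 else 0))
    by (intros; destruct Rlt_dec; reflexivity).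
  rewrite lsum_level_sets by assumption. ring.
Qed.

Lemma n_below_eq d k w : (k <= d)%nat -> length w = d -> n_below d k w = binom_lower d k.
Proof.
  intros Hk Hw. unfold n_below. rewrite count_lsum.
  rewrite (lsum_ext_in _ _ (fun v => if Rlt_dec (INR k) (ip v w) then 0 else 1))
    by (intros; destruct Rlt_dec; reflexivity).
  rewrite lsum_level_sets by assumption. ring.
Qed.

(* U <= L: if <v,w> > kappa >= 0 then <v,-w> < 0 <= kappa. *)
Lemma binom_upper_le_lower d k : (k <= d)%nat -> binom_upper d k <= binom_lower d k.
Proof.
  intros Hk.
  set (w := repeat true d).
  assert (Hw : length w = d) by apply repeat_length.
  assert (Hw' : length (map negb w) = d) by (rewrite length_map; exact Hw).
  replace (binom_upper d k)
    with (lsum (signvecs d) (fun v => if Rlt_dec (INR k) (ip v w) then 1 else 0))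
    by (rewrite lsum_level_sets by assumption; ring).
  replace (binom_lower d k)
    with (lsum (signvecs d) (fun v => if Rlt_dec (INR k) (ip v (map negb w)) then 0 else 1))
    by (rewrite lsum_level_sets by assumption; ring).
  apply lsum_le_in. intros v _. rewrite ip_negb.
  pose proof (pos_INR k).
  destruct (Rlt_dec (INR k) (- ip v w)); destruct (Rlt_dec (INR k) (ip v w)); lra.
Qed.

(* U >= 1, since it contains the term binom(d, d) when kappa < d. *)
Lemma binom_upper_ge_1 d k : (k < d)%nat -> 1 <= binom_upper d k.
Proof.
  intros Hk. unfold binom_upper. rewrite sum_range_lsum, <- (C_nn d).
  pose proof (dtau_range d k).
  apply (lsum_ge_term _ (fun l => C d l) d).
  - intros l Hl. apply in_seq in Hl. apply C_nonneg. lia.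
  - apply in_seq. lia.
Qed.

Lemma prob_Uhat_nonneg : forall u w, Forall (fun x => -1 <= x <= 1) u -> 0 <= prob_Uhat u w.
Proof.
  induction u as [|x u IH]; intros w H; [unfold prob_Uhat; simpl; lra|].
  destruct w as [|b w]; [unfold prob_Uhat; simpl; lra|].
  inversion H; subst.
  change (0 <= (if b then (1 + x) / 2 else (1 - x) / 2) * prob_Uhat u w).
  apply Rmult_le_pos; [destruct b; lra | auto].
Qed.

Lemma prob_Uhat_sum : forall d u, length u = d -> lsum (signvecs d) (prob_Uhat u) = 1.
Proof.
  induction d as [|d IH]; intros u Hu.
  - destruct u; [|discriminate]. unfold lsum, prob_Uhat; simpl; ring.
  - destruct u as [|x u]; [discriminate|]. simpl in Hu; injection Hu as Hu.
    simpl signvecs. rewrite lsum_app, !lsum_map.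
    change (lsum (signvecs d) (fun w => (1 + x) / 2 * prob_Uhat u w) +
            lsum (signvecs d) (fun w => (1 - x) / 2 * prob_Uhat u w) = 1).
    rewrite !lsum_scal, IH by exact Hu. field.
Qed.

Lemma prob_V_given_levels d k p w v : (k <= d)%nat -> In w (signvecs d) ->
  prob_V_given d k p w v = p / binom_upper d k \/
  prob_V_given d k p w v = (1 - p) / binom_lower d k.
Proof.
  intros Hk Hw. apply signvecs_length in Hw. unfold prob_V_given.
  rewrite n_above_eq, n_below_eq by assumption.
  destruct Rlt_dec; auto.
Qed.

Lemma prob_V_bounds d k p u v lo hi : in_cube d u ->
  (forall w, In w (signvecs d) -> lo <= prob_V_given d k p w v <= hi) ->
  lo <= prob_V d k p u v <= hi.
Proof.
  intros [Hu Fu] Hq. apply lsum_mixture_bounds; auto.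
  - intros w _. apply prob_Uhat_nonneg, Fu.
  - apply prob_Uhat_sum, Hu.
Qed.

Lemma prob_out_le d k p u u' S K :
  (forall v, prob_V d k p u v <= K * prob_V d k p u' v) ->
  prob_out d k p u S <= K * prob_out d k p u' S.
Proof.
  intros H. unfold prob_out. rewrite <- lsum_scal. apply lsum_le_in. intros v _.
  assert (HI : 0 <= indic S (outZ d k p v))
    by (unfold indic; destruct excluded_middle_informative; lra).
  specialize (H v). nra.
Qed.

Lemma level_ratio (U L t e1 : R) : 0 < U -> U <= L -> L <= e1 * U -> 1 <= t ->
  (1 - t / (1 + t)) / L <= t / (1 + t) / U /\
  t / (1 + t) / U <= e1 * t * ((1 - t / (1 + t)) / L).
Proof.
  intros HU HUL HLU Ht.
  assert (Ha : t / (1 + t) / U = t * L / ((1 + t) * U * L)) by (field; lra).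
  assert (Hc : (1 - t / (1 + t)) / L = U / ((1 + t) * U * L)) by (field; lra).
  assert (HD : 0 < (1 + t) * U * L) by (apply Rmult_lt_0_compat; nra).
  assert (HinvD : 0 < / ((1 + t) * U * L)) by (apply Rinv_0_lt_compat; exact HD).
  rewrite Ha, Hc. unfold Rdiv. split.
  - apply Rmult_le_compat_r; nra.
  - rewrite <- Rmult_assoc. apply Rmult_le_compat_r; nra.
Qed.

Lemma ln_diff_le x y e : 0 < x -> 0 < y -> ln y - ln x <= e -> y <= exp e * x.
Proof.
  intros Hx Hy H.
  rewrite <- (exp_ln y) by exact Hy.
  replace (exp e * x) with (exp (e + ln x)) by (rewrite exp_plus, exp_ln; auto).
  destruct (Req_dec (ln y) (e + ln x)) as [E|E]; [rewrite E; lra|].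
  left; apply exp_increasing; lra.
Qed.

Theorem theorem4p5 (d kappa : nat) (eps0 eps : R) :
  (1 <= d)%nat -> (kappa <= d - 1)%nat -> 0 <= eps0 -> 0 <= eps ->
  ln (sum_range 0 (dtau d kappa - 1) (fun l => C d l))
    - ln (sum_range (dtau d kappa) d (fun l => C d l)) <= eps ->
  privunit_LDP d kappa (exp eps0 / (1 + exp eps0)) (eps + eps0).
Proof.
  intros Hd Hk He0 He Hln u u' S Hu Hu'.
  change (ln (binom_lower d kappa) - ln (binom_upper d kappa) <= eps) in Hln.
  assert (Hkd : (kappa < d)%nat) by lia.
  assert (HU : 1 <= binom_upper d kappa) by (apply binom_upper_ge_1, Hkd).
  assert (HUL : binom_upper d kappa <= binom_lower d kappa)
    by (apply binom_upper_le_lower; lia).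
  assert (HLU : binom_lower d kappa <= exp eps * binom_upper d kappa)
    by (apply ln_diff_le; [lra | lra | exact Hln]).
  assert (Ht : 1 <= exp eps0) by (pose proof (exp_ineq1_le eps0); lra).
  assert (HK : 0 <= exp eps * exp eps0) by (pose proof (exp_pos eps); pose proof (exp_pos eps0); nra).
  assert (HU0 : 0 < binom_upper d kappa) by lra.
  destruct (level_ratio _ _ _ _ HU0 HUL HLU Ht) as [Hca Hac].
  rewrite exp_plus. apply prob_out_le. intros v.
  assert (Hlevels : forall w, In w (signvecs d) ->
            (1 - exp eps0 / (1 + exp eps0)) / binom_lower d kappa
            <= prob_V_given d kappa (exp eps0 / (1 + exp eps0)) w v
            <= exp eps0 / (1 + exp eps0) / binom_upper d kappa).
  { intros w Hw. destruct (prob_V_given_levels d kappa (exp eps0 / (1 + exp eps0)) w v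
                             ltac:(lia) Hw) as [-> | ->]; lra. }
  destruct (prob_V_bounds _ _ _ _ v _ _ Hu Hlevels) as [_ Hhi].
  destruct (prob_V_bounds _ _ _ _ v _ _ Hu' Hlevels) as [Hlo _].
  nra.
Qed.
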